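(* Let $n\ge 2$ be a power of $2$, let $f\colon\{0,1\}^n\to\{0,1,*\}$ be a partial function and let $x\in f^{-1}( * )$. Then there exists a total function $g\colon\{0,1\}^{N}\to\{0,1\}$ with $N\le 3n^2\log_2^2 n$ such that \[ \mathrm{C}_0(g)\;\ge\;\min\{\mathrm{C}_{\bar 0}(f,x),\,\mathrm{C}_{\bar 1}(f,x)\}\qquad\text{and}\qquad \mathrm{UC}_1(g)\;\le\;3\,\mathrm{C}(f)\log_2^2 n. \]
   Context: For a partial function $f\colon\{0,1\}^n\to\{0,1,*\}$ (inputs with value $*$ are ''undefined''): a partial input $\rho\in\{0,1,*\}^n$ is consistent with $x\in\{0,1\}^n$ if $\rho_i=x_i$ whenever $\rho_i\neq *$; its size $|\rho|$ is the number of non-$*$ entries. For $\Sigma\subseteq\{0,1,*\}$, $\rho$ is a $\Sigma$-certificate for $x$ if $\rho$ is consistent with $x$ and $f(x')\in\Sigma$ for every $x'$ consistent with $\rho$. $\mathrm{C}_\Sigma(f,x)$ is the least size of a $\Sigma$-certificate for $x$, and $\mathrm{C}_\Sigma(f)=\max_{x\in f^{-1}(\Sigma)}\mathrm{C}_\Sigma(f,x)$. We write $0,1,\bar0,\bar1$ for $\Sigma=\{0\},\{1\},\{1,*\},\{0,*\}$ respectively, and $\mathrm{C}(f)=\max\{\mathrm{C}_0(f),\mathrm{C}_1(f)\}$. For a total function $g$, $\mathrm{C}_0(g)$ equals the least $k$ such that $g$ is a width-$k$ CNF, and $\mathrm{UC}_1(g)$ is the least $k$ such that $g$ can be written as an unambiguous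 width-$k$ DNF (a DNF in which every input satisfies at most one term; width = maximum number of literals in a term). *)

From mathcomp Require Import all_boot.
Set Implicit Arguments. Unset Strict Implicit. Unset Printing Implicit Defensive.

(* Inputs {0,1}^n are finite functions 'I_n -> bool.
   Values {0,1,*} are option bool: Some false = 0, Some true = 1, None = *.
   Partial inputs {0,1,*}^n are finite functions 'I_n -> option bool. *)
Definition input n := {ffun 'I_n -> bool}.
Definition pinput n := {ffun 'I_n -> option bool}.

Definition consistent n (rho : pinput n) (x : input n) : bool :=
  [forall i, if rho i is Some b then x i == b else true].

Definition psize n (rho : pinput n) : nat := #|[set i | rho i != None]|.

Definition is_cert n (f : input n -> option bool) (Sig : pred (option bool))
    (rho : pinput n) (x : input n) : bool :=
  consistent rho x && [forall x' : input n, consistent rho x' ==> Sig (f x')].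

(* C_Sigma(f,x): least size of a Sigma-certificate for x (default n is never
   reached when f x \in Sigma, since the full assignment is a certificate). *)
Definition Cx n (f : input n -> option bool) (Sig : pred (option bool)) (x : input n) : nat :=
  \big[minn/n]_(rho : pinput n | is_cert f Sig rho x) psize rho.

Definition Cf n (f : input n -> option bool) (Sig : pred (option bool)) : nat :=
  \max_(x : input n | Sig (f x)) Cx f Sig x.

Definition S0 : pred (option bool) := pred1 (Some false).
Definition S1 : pred (option bool) := pred1 (Some true).
Definition Sbar0 : pred (option bool) := [pred v | v != Some false].
Definition Sbar1 : pred (option bool) := [pred v | v != Some true].

Definition Cmax n (f : input n -> option bool) : nat := maxn (Cf f S0) (Cf f S1).

Definition as_partial N (g : input N -> bool) : input N -> option bool := fun x => Some (g x).

Definition C0 N (g : input N -> bool) : nat := Cf (as_partial g) S0.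

(* DNFs: a set of terms, each term a partial input (its literals are the
   non-* entries); an input satisfies a term iff it is consistent with it. *)
Definition dnf_width N (D : {set pinput N}) : nat := \max_(t in D) psize t.

Definition is_unamb_dnf_for N (g : input N -> bool) (D : {set pinput N}) : bool :=
  [forall x : input N,
     (g x == [exists t in D, consistent t x]) &&
     (#|[set t in D | consistent t x]| <= 1)].

(* UC_1(g): least width of an unambiguous DNF computing g (default N is never
   reached: the DNF of all minterms of g has width N). *)
Definition UC1 N (g : input N -> bool) : nat :=
  \big[minn/N]_(D : {set pinput N} | is_unamb_dnf_for g D) dnf_width D.

From mathcomp Require Import all_boot zify.
Set Implicit Arguments. Unset Strict Implicit. Unset Printing Implicit Defensive.

(* Put c := C(f) and m := min(C_{bar 0}(f,x), C_{bar 1}(f,x)),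
   and name the n positions of an input of f by k-bit strings (n = 2^k).  The function
   g has k copies y_1..y_k of an input of f, plus, for every address a in
   {0,1}^k, a pointer block of k*c*(k+1) bits: for each copy i it lists, in c
   slots of k+1 bits, the positions of a certificate of copy i.  g accepts iff
   for a := (f(y_1),...,f(y_k)) the block of a encodes certificates of size
   <= c, consistent with the copies, forcing each f(y_i) to a_i.
   - Upper bound: each such certificate choice is one DNF term of width
     k*c + k*c*(k+1); the DNF is unambiguous because the copies determine a,
     the block of a determines the certificate domains, and the copies then
     determine the certificates.
   - Lower bound: at the input with every copy equal to x and all blocks zero,
     g is 0.  A 0-certificate of size < m touches fewer than 2^k blocks, so it
     misses some block a; its restriction to each copy has size < m, so by the
     definition of m it extends to inputs y_i with f(y_i) = a_i, and filling
     block a accordingly gives an accepted input, a contradiction. *)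

Lemma bigmin_leq (T : finType) (P : pred T) (F : T -> nat) d i :
  P i -> \big[minn/d]_(j | P j) F j <= F i.
Proof.
move=> Pi; have : i \in index_enum T by rewrite mem_index_enum.
elim: (index_enum T) => // a r IH; rewrite inE big_cons => /orP [/eqP <-|ri].
  by rewrite Pi geq_minl.
case: (P a); last exact: IH.
exact: leq_trans (geq_minr _ _) (IH ri).
Qed.

Lemma psize_sum n (rho : pinput n) : psize rho = \sum_(p < n) (rho p != None).
Proof. by rewrite /psize -sum1dep_card big_mkcond. Qed.

Lemma sum_pair_fst (A B : finType) (a : A) :
  \sum_(x : A * B) (x.1 == a) = #|B|.
Proof.
rewrite -(pair_big xpredT xpredT (fun a' (_ : B) => nat_of_bool (a' == a))) /=.
rewrite (bigD1 a) //= [X in _ + X]big1 ?addn0; last first.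
  by move=> a' ne; rewrite big1 // => b _; rewrite (negbTE ne).
by rewrite -sum1_card; apply: eq_bigr => b _; rewrite eqxx.
Qed.

Section Certificates.
Variables (n : nat) (f : input n -> option bool).
Implicit Types (Sig : pred (option bool)) (rho r : pinput n) (x y : input n).

Lemma psize_le_dim rho : psize rho <= n.
Proof. by rewrite /psize (leq_trans (max_card _)) ?card_ord. Qed.

Lemma Cx_le_dim Sig y : Cx f Sig y <= n.
Proof.
rewrite /Cx; elim/big_ind: _ => // [a b ha _|rho _]; last exact: psize_le_dim.
exact: leq_trans (geq_minl _ _) ha.
Qed.

Lemma full_cert Sig y : Sig (f y) -> is_cert f Sig [ffun i => Some (y i)] y.
Proof.
move=> Sy; apply/andP; split; first by apply/forallP => i; rewrite ffunE.
apply/forallP => y'; apply/implyP => /forallP y'_y.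
suff -> : y' = y by [].
by apply/ffunP => i; have := y'_y i; rewrite ffunE => /eqP.
Qed.

Lemma Cx_witness Sig y :
  Sig (f y) -> exists2 rho, is_cert f Sig rho y & psize rho <= Cx f Sig y.
Proof.
move=> Sy; rewrite /Cx; elim/big_ind: _.
- by exists [ffun i => Some (y i)]; [exact: full_cert | exact: psize_le_dim].
- move=> a b [r1 c1 ha] [r2 c2 hb]; case: (leqP a b) => hab.
    by exists r1; rewrite // (minn_idPl hab).
  by exists r2; rewrite // (minn_idPr (ltnW hab)).
- by move=> r cr; exists r.
Qed.

Lemma Cx_ge m Sig y : Sig (f y) ->
  (forall rho, is_cert f Sig rho y -> m <= psize rho) -> m <= Cx f Sig y.
Proof. by move=> /Cx_witness [rho cert le] lower; exact: leq_trans (lower _ cert) le. Qed.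

Lemma Cx_escape Sig x r : consistent r x -> psize r < Cx f Sig x ->
  exists2 y, consistent r y & ~~ Sig (f y).
Proof.
move=> rx lt; have : ~~ is_cert f Sig r x.
  by apply: contraTN lt => cert; rewrite -leqNgt (bigmin_leq (P := is_cert f Sig ^~ x)).
rewrite /is_cert rx negb_forall => /existsP [y]; rewrite negb_imply => /andP [ry Sy].
by exists y.
Qed.

Lemma Cx_le_Cf Sig y : Sig (f y) -> Cx f Sig y <= Cf f Sig.
Proof. by move=> Sy; exact: (leq_bigmax_cond (P := fun y => Sig (f y))). Qed.

Lemma Cmax_le_dim : Cmax f <= n.
Proof.
rewrite geq_max; apply/andP; split;
  by apply/bigmax_leqP => y _; exact: Cx_le_dim.
Qed.

Definition forcing c rho (b : bool) : bool :=
  (psize rho <= c) && [forall y, consistent rho y ==> (f y == Some b)].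

Lemma forcing_val c rho b y : forcing c rho b -> consistent rho y -> f y = Some b.
Proof. by case/andP=> _ /forallP forces ry; apply/eqP; exact: implyP (forces y) ry. Qed.

Lemma Cmax_forcing b y :
  f y = Some b -> exists2 rho, consistent rho y & forcing (Cmax f) rho b.
Proof.
pose Sig : pred (option bool) := pred1 (Some b).
move=> fy; have Sy : Sig (f y) by rewrite /Sig /= fy.
have [rho /andP [ry /forallP cert] le] := Cx_witness Sy.
exists rho => //; apply/andP; split.
  apply: (leq_trans le); apply: leq_trans (Cx_le_Cf Sy) _.
  by case: b @Sig {fy Sy cert le}; [exact: leq_maxr | exact: leq_maxl].
by apply/forallP => y'; apply/implyP => ry'; have /implyP/(_ ry') := cert y'.
Qed.

Lemma escape_to_value x b r :
  consistent r x -> psize r < minn (Cx f Sbar0 x) (Cx f Sbar1 x) ->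
  exists2 y, consistent r y & f y = Some b.
Proof.
rewrite leq_min => rx /andP [lt0 lt1]; case: b.
  by have [y ry] := Cx_escape rx lt1; rewrite negbK => /eqP; exists y.
by have [y ry] := Cx_escape rx lt0; rewrite negbK => /eqP; exists y.
Qed.

End Certificates.

Lemma UC1_le N (g : input N -> bool) (D : {set pinput N}) :
  is_unamb_dnf_for g D -> UC1 g <= dnf_width D.
Proof. exact: bigmin_leq. Qed.

Section Construction.
Variables (n k c : nat) (f : input n -> option bool).
Hypothesis n_le_2k : n <= 2 ^ k.

Local Notation addr := {ffun 'I_k -> bool}.
(* Within a pointer block: copy i, slot s, and either the "slot used" bit
   (None) or the j-th bit of the position stored in the slot (Some j). *)
Local Notation slot := ('I_k * 'I_c * option 'I_k)%type.
(* Variables of g: bit p of copy i of the input of f, or a bit of the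
   pointer block attached to an address. *)
Local Notation var := ('I_k * 'I_n + addr * slot)%type.

Definition dim : nat := #|{: var}|.
Definition enc (v : var) : 'I_dim := enum_rank v.
Definition dec (j : 'I_dim) : var := enum_val j.
Lemma encK : cancel enc dec. Proof. exact: enum_rankK. Qed.
Lemma decK : cancel dec enc. Proof. exact: enum_valK. Qed.

Lemma dim_eq : dim = k * n + 2 ^ k * (k * c * k.+1).
Proof.
by rewrite /dim card_sum !card_prod card_ffun card_bool !card_ord card_option card_ord.
Qed.

Lemma n_le_card_addr : n <= #|{: addr}|.
Proof. by rewrite card_ffun card_bool card_ord. Qed.

Definition name (p : 'I_n) : addr := enum_val (widen_ord n_le_card_addr p).

Lemma name_inj : injective name.
Proof. by move=> p q /enum_val_inj [] /val_inj. Qed.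

(* Encoding of the domain of a certificate rho in c slots: slot s holds the
   s-th position of the domain (in increasing order), if any. *)
Definition dom (rho : pinput n) : {set 'I_n} := [set p | rho p != None].
Definition slots (rho : pinput n) : seq (option 'I_n) := map Some (enum (dom rho)).
Definition entry (rho : pinput n) (s : 'I_c) : option 'I_n := nth None (slots rho) s.

Definition code (rho : pinput n) (s : 'I_c) (o : option 'I_k) : bool :=
  match o with
  | None => entry rho s != None
  | Some j => if entry rho s is Some p then name p j else false
  end.

Lemma size_slots rho : size (slots rho) = psize rho.
Proof. by rewrite size_map -cardE. Qed.

Lemma nth_slots_used rho s : (nth None (slots rho) s != None) = (s < size (slots rho)).
Proof.
case: ltnP => lt; last by rewrite nth_default.
by apply: contraTN (mem_nth None lt) => /eqP ->; apply/mapP => -[].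
Qed.

Lemma entry_of_code rho1 rho2 :
  (forall s o, code rho1 s o = code rho2 s o) -> entry rho1 =1 entry rho2.
Proof.
move=> same s; have := same s None; rewrite /=.
case e1: (entry rho1 s) => [p1|]; case e2: (entry rho2 s) => [p2|] //= _.
congr Some; apply: name_inj; apply/ffunP => j.
by have := same s (Some j); rewrite /= e1 e2.
Qed.

Lemma dom_of_entry rho1 rho2 : psize rho1 <= c -> psize rho2 <= c ->
  entry rho1 =1 entry rho2 -> dom rho1 = dom rho2.
Proof.
rewrite -!size_slots => le1 le2 same.
have nth_eq s : nth None (slots rho1) s = nth None (slots rho2) s.
  case: (ltnP s c) => [lt|ge]; first exact: (same (Ordinal lt)).
  by rewrite !nth_default // ?(leq_trans le1) ?(leq_trans le2).
have size_eq : size (slots rho1) = size (slots rho2).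
  apply/eqP; rewrite eqn_leq; apply/andP; split; rewrite leqNgt -nth_slots_used.
    by rewrite nth_eq nth_slots_used ltnn.
  by rewrite -nth_eq nth_slots_used ltnn.
have slots_eq : slots rho1 = slots rho2 by apply: (eq_from_nth size_eq) => s _.
have enum_eq : enum (dom rho1) = enum (dom rho2) := inj_map (@Some_inj _) slots_eq.
by apply/setP => p; rewrite -[p \in dom rho1]mem_enum enum_eq mem_enum.
Qed.

Lemma cert_eq_of_dom rho1 rho2 y : dom rho1 = dom rho2 ->
  consistent rho1 y -> consistent rho2 y -> rho1 = rho2.
Proof.
move=> /setP same /forallP r1y /forallP r2y; apply/ffunP => p.
have := same p; have := r1y p; have := r2y p; rewrite !inE.
by case: (rho1 p) => [a|]; case: (rho2 p) => [b|] //= /eqP <- /eqP <-.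
Qed.

Definition term_val (a : addr) (rhos : {ffun 'I_k -> pinput n}) (v : var) : option bool :=
  match v with
  | inl (i, p) => rhos i p
  | inr (a', (i, s, o)) => if a' == a then Some (code (rhos i) s o) else None
  end.
Definition term a rhos : pinput dim := [ffun j => term_val a rhos (dec j)].

Definition dnf : {set pinput dim} :=
  [set t | [exists a : addr, exists rhos : {ffun 'I_k -> pinput n},
     [forall i, forcing f c (rhos i) (a i)] && (t == term a rhos)]].

Definition g (w : input dim) : bool := [exists t in dnf, consistent t w].

Definition copy (w : input dim) (i : 'I_k) : input n :=
  [ffun p => w (enc (inl (i, p)))].

Lemma dnfP (t : pinput dim) :
  reflect (exists (a : addr) (rhos : {ffun 'I_k -> pinput n}),
             (forall i, forcing f c (rhos i) (a i)) /\ t = term a rhos)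
          (t \in dnf).
Proof.
rewrite inE; apply: (iffP existsP) => [[a /existsP [rhos /andP [/forallP F /eqP ->]]]|].
  by exists a, rhos.
case=> a [rhos [F ->]]; exists a; apply/existsP; exists rhos.
by rewrite eqxx andbT; apply/forallP.
Qed.

Lemma consistent_term a rhos w : consistent (term a rhos) w =
  [forall v, if term_val a rhos v is Some b then w (enc v) == b else true].
Proof.
apply/forallP/forallP => cons v; first by have := cons (enc v); rewrite ffunE encK.
by have := cons (dec v); rewrite decK ffunE.
Qed.

Lemma term_copy a rhos w i :
  consistent (term a rhos) w -> consistent (rhos i) (copy w i).
Proof.
rewrite consistent_term => /forallP cons; apply/forallP => p.
by have := cons (inl (i, p)); rewrite ffunE.
Qed.

Lemma term_block a rhos w i s o :
  consistent (term a rhos) w -> w (enc (inr (a, (i, s, o)))) = code (rhos i) s o.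
Proof.
rewrite consistent_term => /forallP /(_ (inr (a, (i, s, o)))).
by rewrite /= eqxx => /eqP.
Qed.

(* Unambiguity: the copies determine the address (through the values of f),
   the pointer block of that address determines the domains of the
   certificates, and the copies then determine the certificates. *)
Lemma dnf_unambiguous t1 t2 w : t1 \in dnf -> t2 \in dnf ->
  consistent t1 w -> consistent t2 w -> t1 = t2.
Proof.
case/dnfP => a1 [r1 [F1 ->]]; case/dnfP => a2 [r2 [F2 ->]] c1 c2.
have a_eq : a1 = a2.
  apply/ffunP => i; apply: Some_inj.
  rewrite -(forcing_val (F1 i) (term_copy i c1)).
  by rewrite -(forcing_val (F2 i) (term_copy i c2)).
subst a2; congr term; apply/ffunP => i.
apply: (cert_eq_of_dom _ (term_copy i c1) (term_copy i c2)).
apply: dom_of_entry; [by case/andP: (F1 i) | by case/andP: (F2 i) |].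
by apply: entry_of_code => s o; rewrite -(term_block i s o c1) -(term_block i s o c2).
Qed.

Lemma g_unambiguous : is_unamb_dnf_for g dnf.
Proof.
apply/forallP => w; rewrite eqxx /=.
apply/card_le1_eqP => t1 t2 /setIdP [d1 c1] /setIdP [d2 c2].
exact: dnf_unambiguous d2 d1 c2 c1.
Qed.

Lemma psize_term a rhos : psize (term a rhos) = \sum_i psize (rhos i) + k * c * k.+1.
Proof.
rewrite psize_sum (reindex enc) /=; last by exists dec => v _; rewrite ?encK ?decK.
under eq_bigr do rewrite ffunE encK.
rewrite big_sumType /=; congr (_ + _).
  under [RHS]eq_bigr do rewrite psize_sum.
  by rewrite pair_big; apply: eq_bigr => -[i p].
transitivity (\sum_(x : addr * slot) (x.1 == a)).
  by apply: eq_bigr => -[a' [[i s] o]] _; case: (a' == a).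
by rewrite sum_pair_fst !card_prod card_option !card_ord.
Qed.

Lemma UC1_g : UC1 g <= k * c * k.+2.
Proof.
apply: leq_trans (UC1_le g_unambiguous) _.
apply/bigmax_leqP => t /dnfP [a [rhos [F ->]]]; rewrite psize_term.
have : \sum_i psize (rhos i) <= \sum_(i < k) c.
  by apply: leq_sum => i _; case/andP: (F i).
rewrite sum_nat_const card_ord; nia.
Qed.

Definition restrict (rho : pinput dim) (i : 'I_k) : pinput n :=
  [ffun p => rho (enc (inl (i, p)))].

Lemma psize_restrict rho i : psize (restrict rho i) <= psize rho.
Proof.
rewrite /psize -(card_imset _ (f := fun p => enc (inl (i, p)))); last first.
  by move=> p q /(can_inj encK) [].
by apply/subset_leq_card/subsetP => j /imsetP [p]; rewrite !inE ffunE => used ->.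
Qed.

Lemma consistent_restrict rho w i :
  consistent rho w -> consistent (restrict rho i) (copy w i).
Proof. by move=> /forallP rw; apply/forallP => p; rewrite !ffunE; exact: rw. Qed.

Lemma fresh_addr (rho : pinput dim) : psize rho < 2 ^ k ->
  exists a : addr, forall a' u, rho (enc (inr (a', u))) != None -> a' != a.
Proof.
move=> small; pose blk j : addr := if dec j is inr (a', _) then a' else [ffun=> false].
have lt : #|blk @: [set j | rho j != None]| < #|{: addr}|.
  by rewrite card_ffun card_bool card_ord (leq_ltn_trans (leq_imset_card _ _)).
have : ~~ ([set: addr] \subset blk @: [set j | rho j != None]).
  by apply: contraTN lt => /subset_leq_card; rewrite cardsT -leqNgt.
case/subsetPn => a _ fresh; exists a => a' u used.
apply: contraNneq fresh => <-; apply/imsetP; exists (enc (inr (a', u))).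
  by rewrite inE.
by rewrite /blk encK.
Qed.

Definition fill (a : addr) (ys : 'I_k -> input n) (rhos : 'I_k -> pinput n) :
    input dim :=
  [ffun j => match dec j with
             | inl (i, p) => ys i p
             | inr (a', (i, s, o)) => (a' == a) && code (rhos i) s o
             end].

Lemma g_fill (a : addr) (ys : 'I_k -> input n) (rhos : 'I_k -> pinput n) :
  (forall i, consistent (rhos i) (ys i) /\ forcing f c (rhos i) (a i)) ->
  g (fill a ys rhos).
Proof.
move=> good; apply/existsP; exists (term a [ffun i => rhos i]); apply/andP; split.
  by apply/dnfP; exists a, [ffun i => rhos i]; split=> // i; rewrite ffunE; case: (good i).
rewrite consistent_term; apply/forallP => -[[i p]|[a' [[i s] o]]] /=; rewrite !ffunE encK.
  by case: (good i) => /forallP /(_ p).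
by case: eqP.
Qed.

Section LowerBound.
Variables (x : input n) (m : nat).
Hypothesis fx : f x = None.
Hypothesis k_gt0 : 0 < k.
Hypothesis m_le_n : m <= n.
Hypothesis forcing_cert :
  forall b y, f y = Some b -> exists2 rho, consistent rho y & forcing f c rho b.
Hypothesis escape :
  forall b r, consistent r x -> psize r < m -> exists2 y, consistent r y & f y = Some b.

Definition hard : input dim := [ffun j => if dec j is inl (_, p) then x p else false].

Lemma copy_hard i : copy hard i = x.
Proof. by apply/ffunP => p; rewrite !ffunE encK. Qed.

Lemma g_hard : g hard = false.
Proof.
apply/existsP => -[t /andP [/dnfP [a [rhos [F ->]]] cons]].
by have := forcing_val (F _) (term_copy (Ordinal k_gt0) cons); rewrite copy_hard fx.
Qed.

Lemma consistent_fill rho a ys rhos : consistent rho hard ->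
  (forall a' u, rho (enc (inr (a', u))) != None -> a' != a) ->
  (forall i, consistent (restrict rho i) (ys i)) -> consistent rho (fill a ys rhos).
Proof.
move=> /forallP rh fresh rys; apply/forallP => j; rewrite -(decK j).
case: (dec j) => [[i p]|[a' [[i s] o]]]; rewrite ffunE encK.
  by have /forallP := rys i => /(_ p); rewrite ffunE.
have := rh (enc (inr (a', (i, s, o)))); rewrite ffunE encK.
case E: (rho _) => [b|] // /eqP <-.
by rewrite (negbTE (fresh a' (i, s, o) _)) ?E.
Qed.

(* The core of the lower bound: a 0-certificate of g at the hard input can
   be completed, on a pointer block it does not touch, to an accepted input. *)
Lemma cert_hard_large rho : is_cert (as_partial g) S0 rho hard -> m <= psize rho.
Proof.
case/andP => rh /forallP rejects; rewrite leqNgt; apply/negP => small.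
have [a fresh] := fresh_addr (leq_trans small (leq_trans m_le_n n_le_2k)).
have /fin_all_exists [ys hys] : forall i, exists y,
    consistent (restrict rho i) y /\ f y = Some (a i).
  move=> i; have restr_x : consistent (restrict rho i) x.
    by rewrite -(copy_hard i); exact: consistent_restrict.
  have restr_small := leq_ltn_trans (psize_restrict rho i) small.
  by have [y ry fy] := escape (a i) restr_x restr_small; exists y.
have /fin_all_exists [rhos hrhos] : forall i, exists r,
    consistent r (ys i) /\ forcing f c r (a i).
  by move=> i; have [r ry F] := forcing_cert (proj2 (hys i)); exists r.
have := rejects (fill a ys rhos).
rewrite (consistent_fill rhos rh fresh (fun i => proj1 (hys i))) /=.
by rewrite /as_partial (g_fill hrhos).
Qed.

Lemma C0_g : m <= C0 g.
Proof.
have g_hard0 : S0 (as_partial g hard) by rewrite /= /as_partial g_hard.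
by apply: leq_trans (Cx_le_Cf g_hard0); apply: Cx_ge => // rho; exact: cert_hard_large.
Qed.

End LowerBound.
End Construction.

Lemma dim_bound n k c : 0 < k -> c <= n ->
  k * n + n * (k * c * k.+1) <= 3 * n ^ 2 * k ^ 2.
Proof.
move=> k_gt0 c_le_n.
have square : n ^ 2 * k ^ 2 = (n * k) * (n * k) by rewrite -expnMn.
have copies : k * n <= n ^ 2 * k ^ 2.
  by rewrite square [k * n]mulnC; case: (n * k) => // t; rewrite leq_pmulr.
have blocks : n * (k * c * k.+1) <= 2 * (n ^ 2 * k ^ 2).
  have k1 : k.+1 <= 2 * k by lia.
  have := leq_mul (leq_mul (leqnn (n * k)) c_le_n) k1; rewrite square; nia.
lia.
Qed.

Theorem theorem2p2 (n k : nat) (hn : 2 <= n) (hk : n = 2 ^ k)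
    (f : input n -> option bool) (x : input n) (hx : f x = None) :
  exists (N : nat) (g : input N -> bool),
    [/\ N <= 3 * n ^ 2 * k ^ 2,
        minn (Cx f Sbar0 x) (Cx f Sbar1 x) <= C0 g &
        UC1 g <= 3 * Cmax f * k ^ 2].
Proof.
have k_gt0 : 0 < k by rewrite lt0n; apply: contraTneq hn => k0; rewrite hk k0.
have n_le_2k : n <= 2 ^ k by rewrite hk.
set c := Cmax f; set m := minn (Cx f Sbar0 x) (Cx f Sbar1 x).
exists (dim n k c), (g f n_le_2k); split.
- by rewrite dim_eq -hk dim_bound // Cmax_le_dim.
- apply: C0_g hx k_gt0 _ _ _.
  + exact: leq_trans (geq_minl _ _) (Cx_le_dim _ _ _).
  + by move=> b y; exact: Cmax_forcing.
  + by move=> b r; exact: escape_to_value.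
- by apply: leq_trans (UC1_g c f n_le_2k) _; nia.
Qed.
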